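(* Let $\mathbb{F}$ be an algebraically closed field of characteristic different from $2$ and let $\mathcal{H}_3(\mathcal{O}(\mathbb{F}))$ be the Jordan algebra of self-adjoint $3\times3$ matrices over the octonion algebra $\mathcal{O}(\mathbb{F})$. Then every 2-local inner derivation on $\mathcal{H}_3(\mathcal{O}(\mathbb{F}))$ is a derivation.
   Context: $\mathcal{Q}(\mathbb{F})$ is a quaternion algebra: associative unital with basis $\mathbf{1},i,j,k$, $i^2=\lambda\mathbf{1}$, $j^2=\mu\mathbf{1}$, $ij=-ji=k$ ($\lambda,\mu\neq0$), involution $a\mapsto\bar a$ negating the $i,j,k$ coordinates. $\mathcal{O}(\mathbb{F})=\mathcal{Q}(\mathbb{F})\oplus\mathcal{Q}(\mathbb{F})$ with product $(a,b)(c,d)=(ac+\nu\bar d b,\ da+b\bar c)$ for a fixed nonzero $\nu\in\mathbb{F}$, and involution $\overline{(a,b)}=(\bar a,-b)$ (the octonion/Cayley algebra; over an algebraically closed field it is the split octonions). $\mathcal{H}_3(\mathcal{O}(\mathbb{F}))$ is the 27-dimensional space of $3\times3$ matrices $x$ over $\mathcal{O}(\mathbb{F})$ with $x_{ij}=\overline{x_{ji}}$, with Jordan product $x\circ y=\frac12(xy+yx)$. A derivation is a linear map $D$ with $D(x\circ y)=D(x)\circ y+x\circ D(y)$; an inner derivation is a map $x\mapsto\sum_{k=1}^m(a_k\circ(b_k\circ x)-b_k\circ(a_k\circ x))$; a 2-local inner derivation is a map $\Delta$ (not assumed linear) such that for all $x,y$ there is an inner derivation $D$ with $\Delta(x)=D(x)$,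 $\Delta(y)=D(y)$. *)

From mathcomp Require Import all_boot all_order all_algebra.
Set Implicit Arguments.
Unset Strict Implicit.
Unset Printing Implicit Defensive.
Import GRing.Theory.
Local Open Scope ring_scope.

(* ---------- Quaternion algebra Q(F) with parameters lam, mu ----------
   basis 1,i,j,k ; i^2 = lam, j^2 = mu, ij = -ji = k.
   Hence k^2 = -lam mu, ik = lam j, ki = -lam j, jk = -mu i, kj = mu i. *)
Record quat (F : Type) := Quat { q0 : F; q1 : F; q2 : F; q3 : F }.
Arguments Quat {F}.

Definition qadd (F : fieldType) (a b : quat F) : quat F :=
  Quat (q0 a + q0 b) (q1 a + q1 b) (q2 a + q2 b) (q3 a + q3 b).
Definition qscale (F : fieldType) (c : F) (a : quat F) : quat F :=
  Quat (c * q0 a) (c * q1 a) (c * q2 a) (c * q3 a).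
Definition qopp (F : fieldType) (a : quat F) : quat F := qscale (-1) a.
Definition qzero (F : fieldType) : quat F := Quat 0 0 0 0.
Definition qconj (F : fieldType) (a : quat F) : quat F :=
  Quat (q0 a) (- q1 a) (- q2 a) (- q3 a).
Definition qmul (F : fieldType) (lam mu : F) (a b : quat F) : quat F :=
  Quat (q0 a * q0 b + lam * (q1 a * q1 b) + mu * (q2 a * q2 b)
          - lam * mu * (q3 a * q3 b))
       (q0 a * q1 b + q1 a * q0 b - mu * (q2 a * q3 b) + mu * (q3 a * q2 b))
       (q0 a * q2 b + q2 a * q0 b + lam * (q1 a * q3 b) - lam * (q3 a * q1 b))
       (q0 a * q3 b + q3 a * q0 b + q1 a * q2 b - q2 a * q1 b).

(* ---------- Octonion (Cayley) algebra O(F) = Q(F) + Q(F) ----------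
   (a,b)(c,d) = (ac + nu conj(d) b, d a + b conj(c)),  conj (a,b) = (conj a, -b). *)
Definition oct (F : Type) := (quat F * quat F)%type.

Definition oadd (F : fieldType) (x y : oct F) : oct F :=
  (qadd x.1 y.1, qadd x.2 y.2).
Definition oscale (F : fieldType) (c : F) (x : oct F) : oct F :=
  (qscale c x.1, qscale c x.2).
Definition ozero (F : fieldType) : oct F := (qzero F, qzero F).
Definition oconj (F : fieldType) (x : oct F) : oct F := (qconj x.1, qopp x.2).
Definition omul (F : fieldType) (lam mu nu : F) (x y : oct F) : oct F :=
  let: (a, b) := x in let: (c, d) := y in
  (qadd (qmul lam mu a c) (qscale nu (qmul lam mu (qconj d) b)),
   qadd (qmul lam mu d a) (qmul lam mu b (qconj c))).

Definition mat3 (F : Type) := 'I_3 -> 'I_3 -> oct F.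

Definition madd (F : fieldType) (x y : mat3 F) : mat3 F :=
  fun i j => oadd (x i j) (y i j).
Definition mscale (F : fieldType) (c : F) (x : mat3 F) : mat3 F :=
  fun i j => oscale c (x i j).
Definition msub (F : fieldType) (x y : mat3 F) : mat3 F :=
  madd x (mscale (-1) y).
Definition mzero (F : fieldType) : mat3 F := fun _ _ => ozero F.

Definition mmul (F : fieldType) (lam mu nu : F) (x y : mat3 F) : mat3 F :=
  fun i j => \big[@oadd F/ozero F]_(k < 3) omul lam mu nu (x i k) (y k j).

Definition hermitian (F : fieldType) (x : mat3 F) : Prop :=
  forall i j, x i j = oconj (x j i).

Definition jmul (F : fieldType) (lam mu nu : F) (x y : mat3 F) : mat3 F :=
  mscale (2%:R)^-1 (madd (mmul lam mu nu x y) (mmul lam mu nu y x)).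

Definition is_derivation (F : fieldType) (lam mu nu : F) (D : mat3 F -> mat3 F)
  : Prop :=
  (forall (a b : F) (x y : mat3 F), hermitian x -> hermitian y ->
      D (madd (mscale a x) (mscale b y)) = madd (mscale a (D x)) (mscale b (D y)))
  /\ (forall x y : mat3 F, hermitian x -> hermitian y ->
      D (jmul lam mu nu x y) =
      madd (jmul lam mu nu (D x) y) (jmul lam mu nu x (D y))).

Definition inner_der (F : fieldType) (lam mu nu : F) (s : seq (mat3 F * mat3 F))
  (x : mat3 F) : mat3 F :=
  foldr (fun ab acc =>
           madd (msub (jmul lam mu nu ab.1 (jmul lam mu nu ab.2 x))
                      (jmul lam mu nu ab.2 (jmul lam mu nu ab.1 x))) acc)
        (mzero F) s.

Definition herm_pairs (F : fieldType) (s : seq (mat3 F * mat3 F)) : Prop :=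
  foldr (fun ab P => [/\ hermitian ab.1, hermitian ab.2 & P]) True s.

Definition two_local_inner (F : fieldType) (lam mu nu : F)
  (Delta : mat3 F -> mat3 F) : Prop :=
  forall x y : mat3 F, hermitian x -> hermitian y ->
    exists s : seq (mat3 F * mat3 F),
      herm_pairs s /\
      Delta x = inner_der lam mu nu s x /\ Delta y = inner_der lam mu nu s y.

From Pilot Require Import Defs.
From Stdlib Require Import ZArith Ring_polynom InitialRing BinList FunctionalExtensionality.
From mathcomp Require Import all_boot all_order all_algebra.
From mathcomp Require Import ring.
Set Implicit Arguments.
Unset Strict Implicit.
Unset Printing Implicit Defensive.
Import GRing.Theory.
Local Open Scope ring_scope.

(* The trace form tform x y = tr (x o y) on H_3(O) is symmetric, associative and
   nondegenerate, so every inner derivation D is skew: tform (D x) y = - tform x (D y).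
   A 2-local inner derivation Delta agrees with a single inner derivation at x and y
   simultaneously, hence is skew as well, and nondegeneracy turns skewness into
   linearity.  Every inner derivation satisfies D (x o x) = 2 D x o x, so Delta does
   (use the pair x, x o x); polarizing at x + y and cancelling 2 gives the Leibniz
   rule.

   The three facts specific to H_3(O) (associativity of the trace form, the identity
   D (x o x) = 2 D x o x for D = [L_a, L_b], and the values of the trace form on the
   coordinate basis) are polynomial identities in the coordinates of generic
   Hermitian matrices; they are checked by normalizing integer polynomials and
   transported to F by evaluation. *)

Section Coordinates.
Variable F : fieldType.

Definition octc (o : oct F) (k : nat) : F :=
  match k with 0 => q0 o.1 | 1 => q1 o.1 | 2 => q2 o.1 | 3 => q3 o.1
  | 4 => q0 o.2 | 5 => q1 o.2 | 6 => q2 o.2 | _ => q3 o.2 end.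

Lemma oct_ext (o o' : oct F) : (forall k, octc o k = octc o' k) -> o = o'.
Proof.
case: o o' => [[? ? ? ?] [? ? ? ?]] [[? ? ? ?] [? ? ? ?]] e.
by move: (e 0) (e 1) (e 2) (e 3) (e 4) (e 5) (e 6) (e 7) => /= -> -> -> -> -> -> -> ->.
Qed.

Lemma octc_add o o' k : octc (oadd o o') k = octc o k + octc o' k.
Proof. by case: k => [|[|[|[|[|[|[|k]]]]]]]. Qed.

Lemma octc_scale c o k : octc (oscale c o) k = c * octc o k.
Proof. by case: k => [|[|[|[|[|[|[|k]]]]]]]. Qed.

Lemma octc_zero k : octc (ozero F) k = 0.
Proof. by case: k => [|[|[|[|[|[|[|k]]]]]]]. Qed.

Definition mxc (x : mat3 F) i j k := octc (x i j) k.

Lemma mx_ext (x y : mat3 F) : (forall i j k, mxc x i j k = mxc y i j k) -> x = y.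
Proof.
by move=> e; do 2![apply: functional_extensionality => ?]; apply: oct_ext; apply: e.
Qed.

Lemma mxc_add x y i j k : mxc (madd x y) i j k = mxc x i j k + mxc y i j k.
Proof. exact: octc_add. Qed.

Lemma mxc_scale c x i j k : mxc (mscale c x) i j k = c * mxc x i j k.
Proof. exact: octc_scale. Qed.

Lemma mxc_zero i j k : mxc (mzero F) i j k = 0.
Proof. exact: octc_zero. Qed.

End Coordinates.

Ltac oct_ring := apply: oct_ext => k; rewrite !(octc_add, octc_scale, octc_zero); ring.
Ltac mx_ring :=
  apply: mx_ext => i j k; rewrite /msub !(mxc_add, mxc_scale, mxc_zero); ring.

Ltac oct_expand_ring :=
  rewrite /oconj /Defs.omul /oadd /oscale /qadd /qmul /qconj /qopp /qscale /=;
  congr (_, _); congr Quat; ring.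

Section Octonions.
Variables (F : fieldType) (lam mu nu : F).
Notation omul := (omul lam mu nu).

Lemma oconjK : involutive (@oconj F).
Proof.
case=> [[? ? ? ?] [? ? ? ?]].
by oct_expand_ring.
Qed.

Lemma oconj_add (o o' : oct F) : oconj (oadd o o') = oadd (oconj o) (oconj o').
Proof.
case: o o' => [[? ? ? ?] [? ? ? ?]] [[? ? ? ?] [? ? ? ?]].
by oct_expand_ring.
Qed.

Lemma oconj_scale c (o : oct F) : oconj (oscale c o) = oscale c (oconj o).
Proof.
case: o => [[? ? ? ?] [? ? ? ?]].
by oct_expand_ring.
Qed.

Lemma oconj_zero : oconj (ozero F) = ozero F.
Proof. by rewrite /oconj /qconj /qopp /qscale /= oppr0 mulr0. Qed.

Lemma oconj_mul o o' : oconj (omul o o') = omul (oconj o') (oconj o).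
Proof.
case: o o' => [[? ? ? ?] [? ? ? ?]] [[? ? ? ?] [? ? ? ?]].
by oct_expand_ring.
Qed.

Lemma omulDl o1 o2 o : omul (oadd o1 o2) o = oadd (omul o1 o) (omul o2 o).
Proof.
case: o1 o2 o => [[? ? ? ?] [? ? ? ?]] [[? ? ? ?] [? ? ? ?]] [[? ? ? ?] [? ? ? ?]].
by oct_expand_ring.
Qed.

Lemma omulDr o o1 o2 : omul o (oadd o1 o2) = oadd (omul o o1) (omul o o2).
Proof.
case: o1 o2 o => [[? ? ? ?] [? ? ? ?]] [[? ? ? ?] [? ? ? ?]] [[? ? ? ?] [? ? ? ?]].
by oct_expand_ring.
Qed.

Lemma omulZl c o1 o : omul (oscale c o1) o = oscale c (omul o1 o).
Proof.
case: o1 o => [[? ? ? ?] [? ? ? ?]] [[? ? ? ?] [? ? ? ?]].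
by oct_expand_ring.
Qed.

Lemma omulZr c o o1 : omul o (oscale c o1) = oscale c (omul o o1).
Proof.
case: o1 o => [[? ? ? ?] [? ? ? ?]] [[? ? ? ?] [? ? ? ?]].
by oct_expand_ring.
Qed.

End Octonions.

Section Matrices.
Variables (F : fieldType) (lam mu nu : F).
Notation mmul := (mmul lam mu nu).
Notation jmul := (jmul lam mu nu).
Notation hermitian := (@Defs.hermitian F).

Lemma hermitianD x y : hermitian x -> hermitian y -> hermitian (madd x y).
Proof. by move=> hx hy i j; rewrite /madd hx hy oconj_add. Qed.

Lemma hermitianZ c x : hermitian x -> hermitian (mscale c x).
Proof. by move=> hx i j; rewrite /mscale hx oconj_scale. Qed.

Lemma hermitian0 : hermitian (mzero F).
Proof. by move=> i j; rewrite /mzero oconj_zero. Qed.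

Lemma hermitianB x y : hermitian x -> hermitian y -> hermitian (msub x y).
Proof. by move=> hx hy; apply/hermitianD/hermitianZ. Qed.

Lemma mmulDl x y z : mmul (madd x y) z = madd (mmul x z) (mmul y z).
Proof.
do 2![apply: functional_extensionality => ?].
by rewrite /Defs.mmul /madd !big_ord_recl !big_ord0 !omulDl; oct_ring.
Qed.

Lemma mmulDr x y z : mmul z (madd x y) = madd (mmul z x) (mmul z y).
Proof.
do 2![apply: functional_extensionality => ?].
by rewrite /Defs.mmul /madd !big_ord_recl !big_ord0 !omulDr; oct_ring.
Qed.

Lemma mmulZl c x z : mmul (mscale c x) z = mscale c (mmul x z).
Proof.
do 2![apply: functional_extensionality => ?].
by rewrite /Defs.mmul /mscale !big_ord_recl !big_ord0 !omulZl; oct_ring.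
Qed.

Lemma mmulZr c x z : mmul z (mscale c x) = mscale c (mmul z x).
Proof.
do 2![apply: functional_extensionality => ?].
by rewrite /Defs.mmul /mscale !big_ord_recl !big_ord0 !omulZr; oct_ring.
Qed.

Lemma oconj_mmul x y i j : hermitian x -> hermitian y ->
  oconj (mmul x y i j) = mmul y x j i.
Proof.
move=> hx hy; rewrite /Defs.mmul !big_ord_recl !big_ord0.
by rewrite !oconj_add oconj_zero !oconj_mul -!hx -!hy.
Qed.

Lemma mscale0 x : mscale 0 x = mzero F.
Proof. by mx_ring. Qed.

Lemma msub_eq0 x y : msub x y = mzero F -> x = y.
Proof.
move=> e; apply: mx_ext => i j k; move/(congr1 (fun m => mxc m i j k)): e.
by rewrite /msub mxc_add mxc_scale mxc_zero mulN1r => /eqP; rewrite subr_eq0 => /eqP.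
Qed.

Lemma jmulC x y : jmul x y = jmul y x.
Proof. by apply: mx_ext => i j k; rewrite /jmul !(mxc_add, mxc_scale); ring. Qed.

Lemma jmulDl x y z : jmul (madd x y) z = madd (jmul x z) (jmul y z).
Proof. by rewrite /jmul mmulDl mmulDr; mx_ring. Qed.

Lemma jmulZl c x z : jmul (mscale c x) z = mscale c (jmul x z).
Proof. by rewrite /jmul mmulZl mmulZr; mx_ring. Qed.

Lemma jmulDr x y z : jmul z (madd x y) = madd (jmul z x) (jmul z y).
Proof. by rewrite jmulC jmulDl !(jmulC z). Qed.

Lemma jmul0l x : jmul (mzero F) x = mzero F.
Proof. by rewrite -{1}(mscale0 (mzero F)) jmulZl mscale0. Qed.

Lemma hermitian_jmul x y : hermitian x -> hermitian y -> hermitian (jmul x y).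
Proof.
move=> hx hy i j; rewrite /jmul /mscale /madd oconj_scale oconj_add.
by rewrite !oconj_mmul //; congr oscale; oct_ring.
Qed.

Definition jder (a b x : mat3 F) : mat3 F := msub (jmul a (jmul b x)) (jmul b (jmul a x)).

Lemma jderE a b x : jder a b x = msub (jmul a (jmul b x)) (jmul b (jmul a x)).
Proof. by []. Qed.

Definition mtr (x : mat3 F) : F := \sum_(i < 3) q0 (x i i).1.

Lemma mtrD x y : mtr (madd x y) = mtr x + mtr y.
Proof. by rewrite /mtr -big_split. Qed.

Lemma mtrZ c x : mtr (mscale c x) = c * mtr x.
Proof. by rewrite /mtr mulr_sumr. Qed.

Definition tform (x y : mat3 F) : F := mtr (jmul x y).

Lemma tformE x y : tform x y = mtr (jmul x y).
Proof. by []. Qed.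

Lemma tformC x y : tform x y = tform y x.
Proof. by rewrite /tform jmulC. Qed.

Lemma tformDl x y z : tform (madd x y) z = tform x z + tform y z.
Proof. by rewrite /tform jmulDl mtrD. Qed.

Lemma tformZl c x z : tform (mscale c x) z = c * tform x z.
Proof. by rewrite /tform jmulZl mtrZ. Qed.

Lemma tformDr x y z : tform z (madd x y) = tform z x + tform z y.
Proof. by rewrite tformC tformDl !(tformC z). Qed.

Lemma tformZr c x z : tform z (mscale c x) = c * tform z x.
Proof. by rewrite tformC tformZl tformC. Qed.

Lemma tform0l x : tform (mzero F) x = 0.
Proof. by rewrite -(mscale0 (mzero F)) tformZl mul0r. Qed.

End Matrices.

(* Each operation prefixed with s mirrors the homonymous operation of Defs on integer
   polynomials in the normal form of Ring_polynom, where equality is decidable. *)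
Definition spoly := Pol Z.
Definition sadd : spoly -> spoly -> spoly := Padd Z0 Z.add Z.eqb.
Definition smul : spoly -> spoly -> spoly := Pmul Z0 (Zpos xH) Z.add Z.mul Z.eqb.
Definition sopp : spoly -> spoly := Popp Z.opp.
Definition ssub (p q : spoly) : spoly := sadd p (sopp q).
Definition sconst (z : Z) : spoly := Pc z.
Definition svar (n : nat) : spoly := mk_X Z0 (Zpos xH) (Pos.of_nat n.+1).
Definition seqb : spoly -> spoly -> bool := Peq Z.eqb.

Definition sqadd (a b : quat spoly) : quat spoly :=
  Quat (sadd (q0 a) (q0 b)) (sadd (q1 a) (q1 b)) (sadd (q2 a) (q2 b)) (sadd (q3 a) (q3 b)).
Definition sqscale (c : spoly) (a : quat spoly) : quat spoly :=
  Quat (smul c (q0 a)) (smul c (q1 a)) (smul c (q2 a)) (smul c (q3 a)).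
Definition sqzero : quat spoly := Quat (sconst 0) (sconst 0) (sconst 0) (sconst 0).
Definition sqconj (a : quat spoly) : quat spoly :=
  Quat (q0 a) (sopp (q1 a)) (sopp (q2 a)) (sopp (q3 a)).
Definition sqmul (lam mu : spoly) (a b : quat spoly) : quat spoly :=
  Quat (ssub (sadd (sadd (smul (q0 a) (q0 b)) (smul lam (smul (q1 a) (q1 b))))
                   (smul mu (smul (q2 a) (q2 b))))
             (smul (smul lam mu) (smul (q3 a) (q3 b))))
       (sadd (ssub (sadd (smul (q0 a) (q1 b)) (smul (q1 a) (q0 b)))
                   (smul mu (smul (q2 a) (q3 b))))
             (smul mu (smul (q3 a) (q2 b))))
       (ssub (sadd (sadd (smul (q0 a) (q2 b)) (smul (q2 a) (q0 b)))
                   (smul lam (smul (q1 a) (q3 b))))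
             (smul lam (smul (q3 a) (q1 b))))
       (ssub (sadd (sadd (smul (q0 a) (q3 b)) (smul (q3 a) (q0 b))) (smul (q1 a) (q2 b)))
             (smul (q2 a) (q1 b))).

Definition soct := (quat spoly * quat spoly)%type.
Definition soadd (x y : soct) : soct := (sqadd x.1 y.1, sqadd x.2 y.2).
Definition soscale (c : spoly) (x : soct) : soct := (sqscale c x.1, sqscale c x.2).
Definition sozero : soct := (sqzero, sqzero).
Definition soconj (x : soct) : soct := (sqconj x.1, sqscale (sconst (-1)) x.2).
Definition somul (lam mu nu : spoly) (x y : soct) : soct :=
  let: (a, b) := x in let: (c, d) := y in
  (sqadd (sqmul lam mu a c) (sqscale nu (sqmul lam mu (sqconj d) b)),
   sqadd (sqmul lam mu d a) (sqmul lam mu b (sqconj c))).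

(* Nine explicit fields, so that call-by-value evaluation computes each entry once. *)
Record smat := SMat {
  s00 : soct; s01 : soct; s02 : soct;
  s10 : soct; s11 : soct; s12 : soct;
  s20 : soct; s21 : soct; s22 : soct }.

Definition sget (m : smat) (i j : nat) : soct :=
  match i, j with
  | 0, 0 => s00 m | 0, 1 => s01 m | 0, _ => s02 m
  | 1, 0 => s10 m | 1, 1 => s11 m | 1, _ => s12 m
  | _, 0 => s20 m | _, 1 => s21 m | _, _ => s22 m end.

Definition stab (f : nat -> nat -> soct) : smat :=
  SMat (f 0 0) (f 0 1) (f 0 2) (f 1 0) (f 1 1) (f 1 2) (f 2 0) (f 2 1) (f 2 2).

Definition slam := svar 0.
Definition smu := svar 1.
Definition snu := svar 2.
Definition shalf := svar 3.

Definition smadd (x y : smat) := stab (fun i j => soadd (sget x i j) (sget y i j)).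
Definition smscale (c : spoly) (x : smat) := stab (fun i j => soscale c (sget x i j)).
Definition smsub (x y : smat) := smadd x (smscale (sconst (-1)) y).
Definition smmul (x y : smat) := stab (fun i j =>
  soadd (somul slam smu snu (sget x i 0) (sget y 0 j))
   (soadd (somul slam smu snu (sget x i 1) (sget y 1 j))
    (soadd (somul slam smu snu (sget x i 2) (sget y 2 j)) sozero))).
Definition sjmul (x y : smat) := smscale shalf (smadd (smmul x y) (smmul y x)).
Definition sjder (a b x : smat) := smsub (sjmul a (sjmul b x)) (sjmul b (sjmul a x)).
Definition strace (m : smat) : spoly :=
  sadd (q0 (sget m 0 0).1) (sadd (q0 (sget m 1 1).1) (sadd (q0 (sget m 2 2).1) (sconst 0))).

Definition sqeqb (a b : quat spoly) :=
  [&& seqb (q0 a) (q0 b), seqb (q1 a) (q1 b), seqb (q2 a) (q2 b) & seqb (q3 a) (q3 b)].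
Definition soeqb (a b : soct) := sqeqb a.1 b.1 && sqeqb a.2 b.2.
Definition smeqb (x y : smat) :=
  all (fun i => all (fun j => soeqb (sget x i j) (sget y i j)) (iota 0 3)) (iota 0 3).

(* The Hermitian matrix whose 27 coordinates (three diagonal scalars, then the
   octonions in positions 01, 02, 12) are [f 0], ..., [f 26]. *)
Definition sdiag (c : spoly) : soct := (Quat c (sconst 0) (sconst 0) (sconst 0), sqzero).
Definition soff (f : nat -> spoly) (n : nat) : soct :=
  (Quat (f n) (f n.+1) (f n.+2) (f n.+3),
   Quat (f (n + 4)%N) (f (n + 5)%N) (f (n + 6)%N) (f (n + 7)%N)).
Definition sherm (f : nat -> spoly) : smat :=
  SMat (sdiag (f 0%N)) (soff f 3) (soff f 11)
       (soconj (soff f 3)) (sdiag (f 1%N)) (soff f 19)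
       (soconj (soff f 11)) (soconj (soff f 19)) (sdiag (f 2%N)).
Definition sgen (base : nat) : smat := sherm (fun n => svar (base + n)).
Definition sunit (k : nat) : smat := sherm (fun n => sconst (Z.b2z (n == k))).

(* Variables 0-3 stand for lam, mu, nu and 1/2; X0, X1 and X2 are generic Hermitian
   matrices in the variables 4-30, 31-57 and 58-84. *)
Definition X0 := sgen 4.
Definition X1 := sgen 31.
Definition X2 := sgen 58.

Definition tr_assoc_check :=
  seqb (strace (sjmul (sjmul X0 X1) X2)) (strace (sjmul X0 (sjmul X1 X2))).

Definition jder_sq_check :=
  smeqb (sjder X1 X2 (sjmul X0 X0)) (smscale (sconst 2) (sjmul (sjder X1 X2 X0) X0)).

(* tform x (sunit k) is sweight k times the k-th coordinate of x: the weight is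
   2 * 1/2 on the diagonal and 4 * 1/2 * n(e_c) on the c-th coordinate of an
   off-diagonal octonion, where n(e_c) = snorm c is the norm of the c-th basis vector. *)
Definition snorm (c : nat) : spoly :=
  match c with
  | 0 => sconst 1 | 1 => sopp slam | 2 => sopp smu | 3 => smul slam smu
  | 4 => sopp snu | 5 => smul slam snu | 6 => smul smu snu
  | _ => sopp (smul slam (smul smu snu)) end.
Definition sweight (k : nat) : spoly :=
  if (k < 3)%N then smul (sconst 2) shalf
  else smul (sconst 4) (smul shalf (snorm ((k - 3) %% 8)%N)).

Definition trace_form_basis_check :=
  all (fun k => seqb (strace (sjmul X0 (sunit k))) (smul (sweight k) (svar (4 + k)))) (iota 0 27).

Lemma tr_assoc_check_ok : tr_assoc_check.
Proof. vm_cast_no_check (erefl true). Qed.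

Lemma jder_sq_check_ok : jder_sq_check.
Proof. vm_cast_no_check (erefl true). Qed.

Lemma trace_form_basis_check_ok : trace_form_basis_check.
Proof. vm_cast_no_check (erefl true). Qed.

Lemma nth_succ_pos (A : Type) (d : A) p l :
  BinList.nth d (Pos.succ p) l = BinList.nth d p (List.tl l).
Proof.
rewrite nth_jump; elim: p l => [p IH|p _|] l //=.
- by rewrite IH jump_succ /= jump_tl.
- by rewrite -jump_tl nth_jump.
Qed.

Section Evaluation.
Variable F : fieldType.

Lemma field_ring_theory : ring_theory (0 : F) 1 +%R *%R (fun x y => x - y) -%R eq.
Proof.
apply: mk_rt; [exact: add0r | exact: addrC | exact: addrA | exact: mul1r
  | exact: mulrC | exact: mulrA | exact: mulrDl | by [] | exact: subrr].
Qed.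

Lemma field_ring_eq_ext : ring_eq_ext (@GRing.add F) (@GRing.mul F) (@GRing.opp F) eq.
Proof. by split=> x1 x2 -> // y1 y2 ->. Qed.

Let Fsetoid : Setoid.Setoid_Theory F eq := RelationClasses.eq_equivalence.
Let Faring := Rth_ARth Fsetoid field_ring_eq_ext field_ring_theory.
Let Zmorph := gen_phiZ_morph Fsetoid field_ring_eq_ext field_ring_theory.

Definition ev (l : seq F) (p : spoly) : F := Pphi 0 +%R *%R (gen_phiZ 0 1 +%R *%R -%R) l p.

Variable l : seq F.

Lemma ev_add p q : ev l (sadd p q) = ev l p + ev l q.
Proof. exact: (Padd_ok Fsetoid field_ring_eq_ext Faring Zmorph q p l). Qed.

Lemma ev_mul p q : ev l (smul p q) = ev l p * ev l q.
Proof. exact: (Pmul_ok Fsetoid field_ring_eq_ext Faring Zmorph p q l). Qed.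

Lemma ev_opp p : ev l (sopp p) = - ev l p.
Proof. exact: (Popp_ok Fsetoid field_ring_eq_ext Faring Zmorph p l). Qed.

Lemma ev_sub p q : ev l (ssub p q) = ev l p - ev l q.
Proof. by rewrite /ssub ev_add ev_opp. Qed.

Lemma ev_var n : ev l (svar n) = nth 0 l n.
Proof.
rewrite /ev -(mkX_ok Fsetoid field_ring_eq_ext Faring Zmorph).
elim: n l => [|n IH] [|a s] //;
  by rewrite -[Pos.of_nat _]/(Pos.succ (Pos.of_nat n.+1)) nth_succ_pos IH ?nth_nil.
Qed.

Lemma ev_eq p q : seqb p q -> ev l p = ev l q.
Proof. by move=> e; apply: (Peq_ok Fsetoid field_ring_eq_ext Zmorph p q e l). Qed.

End Evaluation.

Section MatrixEvaluation.
Variables (F : fieldType) (l : seq F).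

Lemma ev_const1 : ev l (sconst 1) = 1. Proof. by []. Qed.
Lemma ev_constN1 : ev l (sconst (-1)) = -1. Proof. by []. Qed.
Lemma ev_const2 : ev l (sconst 2) = 2%:R. Proof. by []. Qed.
Lemma ev_const4 : ev l (sconst 4) = 2%:R * 2%:R. Proof. by rewrite /ev /=; ring. Qed.

Definition evq (a : quat spoly) : quat F :=
  Quat (ev l (q0 a)) (ev l (q1 a)) (ev l (q2 a)) (ev l (q3 a)).
Definition evo (x : soct) : oct F := (evq x.1, evq x.2).
Definition evm (m : smat) : mat3 F := fun i j => evo (sget m i j).

Ltac ev_simpl := rewrite /= ?(ev_add, ev_mul, ev_sub, ev_opp).

Lemma evq_add a b : evq (sqadd a b) = qadd (evq a) (evq b).
Proof. by rewrite /evq; ev_simpl. Qed.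

Lemma evq_scale c a : evq (sqscale c a) = qscale (ev l c) (evq a).
Proof. by rewrite /evq; ev_simpl. Qed.

Lemma evq_conj a : evq (sqconj a) = qconj (evq a).
Proof. by rewrite /evq; ev_simpl. Qed.

Lemma evq_mul sl sm a b : evq (sqmul sl sm a b) = qmul (ev l sl) (ev l sm) (evq a) (evq b).
Proof. by rewrite /evq; ev_simpl. Qed.

Lemma evo_add x y : evo (soadd x y) = oadd (evo x) (evo y).
Proof. by rewrite /evo /= !evq_add. Qed.

Lemma evo_scale c x : evo (soscale c x) = oscale (ev l c) (evo x).
Proof. by rewrite /evo /= !evq_scale. Qed.

Lemma evo_conj x : evo (soconj x) = oconj (evo x).
Proof. by rewrite /evo /= evq_conj evq_scale ev_constN1. Qed.

Lemma evo_mul sl sm sn x y :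
  evo (somul sl sm sn x y) = omul (ev l sl) (ev l sm) (ev l sn) (evo x) (evo y).
Proof.
by case: x y => a b [c d]; rewrite /evo /= !evq_add !evq_mul !evq_scale !evq_mul !evq_conj.
Qed.

Lemma sget_stab f (i j : 'I_3) : sget (stab f) i j = f i j.
Proof. by case: i => [[|[|[|?]]] ?]; case: j => [[|[|[|?]]] ?]. Qed.

Lemma evm_add x y : evm (smadd x y) = madd (evm x) (evm y).
Proof. by do 2![apply: functional_extensionality => ?]; rewrite /evm sget_stab evo_add. Qed.

Lemma evm_scale c x : evm (smscale c x) = mscale (ev l c) (evm x).
Proof. by do 2![apply: functional_extensionality => ?]; rewrite /evm sget_stab evo_scale. Qed.

Lemma evm_sub x y : evm (smsub x y) = msub (evm x) (evm y).
Proof. by rewrite /smsub evm_add evm_scale ev_constN1. Qed.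

Lemma evm_mul x y :
  evm (smmul x y) = mmul (ev l slam) (ev l smu) (ev l snu) (evm x) (evm y).
Proof.
do 2![apply: functional_extensionality => ?].
by rewrite /evm /smmul /mmul sget_stab !big_ord_recl big_ord0 /= !evo_add !evo_mul.
Qed.

Lemma evm_eq x y : smeqb x y -> evm x = evm y.
Proof.
move=> /allP exy; apply: functional_extensionality => i.
apply: functional_extensionality => j.
have mem3 (k : 'I_3) : nat_of_ord k \in iota 0 3 by rewrite mem_iota ltn_ord.
have /allP/(_ _ (mem3 j)) := exy _ (mem3 i).
case/andP=> /and4P[e0 e1 e2 e3] /and4P[e4 e5 e6 e7].
by rewrite /evm /evo /evq !(ev_eq l e0, ev_eq l e1, ev_eq l e2, ev_eq l e3)
  !(ev_eq l e4, ev_eq l e5, ev_eq l e6, ev_eq l e7).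
Qed.

Lemma ev_strace A : ev l (strace A) = mtr (evm A).
Proof. by rewrite /strace !ev_add /mtr !big_ord_recl big_ord0. Qed.

Lemma ev_strace_eq A B : seqb (strace A) (strace B) -> mtr (evm A) = mtr (evm B).
Proof. by move/(ev_eq l); rewrite !ev_strace. Qed.


End MatrixEvaluation.

Lemma nth_cat_add (T : Type) (x0 : T) s1 s2 n : nth x0 (s1 ++ s2) (size s1 + n) = nth x0 s2 n.
Proof. by rewrite -nth_drop drop_size_cat. Qed.

Section GenericPoint.
Variable F : fieldType.
Hypothesis two_neq0 : (2%:R : F) != 0.
Notation hermitian := (@Defs.hermitian F).

Definition i0 : 'I_3 := @Ordinal 3 0 isT.
Definition i1 : 'I_3 := @Ordinal 3 1 isT.
Definition i2 : 'I_3 := @Ordinal 3 2 isT.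

Lemma ord3P (i : 'I_3) : [\/ i = i0, i = i1 | i = i2].
Proof.
by case: i => [[|[|[|?]]] ?] //; [apply: Or31 | apply: Or32 | apply: Or33]; apply: val_inj.
Qed.

Definition hcoord (x : mat3 F) (n : nat) : F :=
  if n == 0%N then q0 (x i0 i0).1 else if n == 1%N then q0 (x i1 i1).1
  else if n == 2%N then q0 (x i2 i2).1 else if (n < 11)%N then octc (x i0 i1) (n - 3)
  else if (n < 19)%N then octc (x i0 i2) (n - 11) else octc (x i1 i2) (n - 19).

Lemma self_conj_real (o : oct F) : o = oconj o -> o = (Quat (q0 o.1) 0 0 0, qzero F).
Proof.
have anti (c : F) : c = - c -> c = 0.
  move=> e; apply/eqP; rewrite -(mulrI_eq0 _ (lregP two_neq0)) mulr_natl mulr2n.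
  by rewrite {1}e addNr.
case: o => [[? ? ? ?] [? ? ? ?]].
rewrite /oconj /qconj /qopp /qscale /= => -[/anti -> /anti -> /anti ->].
by rewrite !mulN1r => /anti -> /anti -> /anti -> /anti ->.
Qed.

Lemma evm_sherm (l : seq F) f x : hermitian x ->
  (forall n, (n < 27)%N -> ev l (f n) = hcoord x n) -> evm l (sherm f) = x.
Proof.
move=> hx hf; apply: functional_extensionality => i; apply: functional_extensionality => j.
have diag (k : 'I_3) n : ev l (f n) = q0 (x k k).1 -> evo l (sdiag (f n)) = x k k.
  by move=> e; rewrite [RHS]self_conj_real -?hx // /evo /evq /= e.
have e01 : evo l (soff f 3) = x i0 i1.
  by rewrite /evo /evq /= !hf // /hcoord /=; case: (x i0 i1) => [[? ? ? ?] [? ? ? ?]].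
have e02 : evo l (soff f 11) = x i0 i2.
  by rewrite /evo /evq /= !hf // /hcoord /=; case: (x i0 i2) => [[? ? ? ?] [? ? ? ?]].
have e12 : evo l (soff f 19) = x i1 i2.
  by rewrite /evo /evq /= !hf // /hcoord /=; case: (x i1 i2) => [[? ? ? ?] [? ? ? ?]].
by case: (ord3P i) => ->; case: (ord3P j) => ->; rewrite /evm /= ?evo_conj ?e01 ?e02 ?e12 -?hx //;
  apply: diag; rewrite hf.
Qed.

Lemma hermitian_evm_sherm (l : seq F) f : hermitian (evm l (sherm f)).
Proof.
move=> i j; case: (ord3P i) => ->; case: (ord3P j) => ->; rewrite /evm /= ?evo_conj ?oconjK //;
  by rewrite /evo /evq /= /oconj /qconj /qopp /qscale /= oppr0 mulr0.
Qed.

Definition hcoords (x : mat3 F) : seq F := mkseq (hcoord x) 27.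

Definition env_params (l : seq F) (lam mu nu : F) : Prop :=
  [/\ ev l slam = lam, ev l smu = mu, ev l snu = nu & ev l shalf = 2%:R^-1].

Lemma generic_point lam mu nu x y z : hermitian x -> hermitian y -> hermitian z ->
  exists l, [/\ env_params l lam mu nu, evm l X0 = x, evm l X1 = y & evm l X2 = z].
Proof.
move=> hx hy hz; pose l := [:: lam; mu; nu; 2%:R^-1] ++ hcoords x ++ hcoords y ++ hcoords z.
exists l; split; first by split; apply: ev_var.
- apply: evm_sherm => // n n_lt; rewrite ev_var (nth_cat_add _ [:: _; _; _; _]).
  by rewrite nth_cat nth_mkseq ?size_mkseq ?n_lt.
- apply: evm_sherm => // n n_lt; rewrite ev_var -[(31 + n)%N]/(4 + (27 + n))%N.
  rewrite (nth_cat_add _ [:: _; _; _; _]) (nth_cat_add _ (hcoords x) _ n).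
  by rewrite nth_cat nth_mkseq ?size_mkseq ?n_lt.
- apply: evm_sherm => // n n_lt; rewrite ev_var -[(58 + n)%N]/(4 + (27 + (27 + n)))%N.
  rewrite (nth_cat_add _ [:: _; _; _; _]) (nth_cat_add _ (hcoords x)).
  by rewrite (nth_cat_add _ (hcoords y)) nth_mkseq.
Qed.

End GenericPoint.

Section Transfer.
Variables (F : fieldType) (lam mu nu : F) (l : seq F).
Hypothesis hl : env_params l lam mu nu.

Lemma evm_sjmul A B : evm l (sjmul A B) = jmul lam mu nu (evm l A) (evm l B).
Proof. by case: hl => el em en eh; rewrite /sjmul evm_scale evm_add !evm_mul el em en eh. Qed.

Lemma evm_sjder A B C : evm l (sjder A B C) = jder lam mu nu (evm l A) (evm l B) (evm l C).
Proof. by rewrite /sjder evm_sub !evm_sjmul. Qed.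

Lemma ev_sweight_neq0 k : (2%:R : F) != 0 -> lam != 0 -> mu != 0 -> nu != 0 ->
  ev l (sweight k) != 0.
Proof.
case: hl => el em en eh two_neq0 lam_neq0 mu_neq0 nu_neq0.
have half_neq0 : ev l shalf != 0 by rewrite eh invr_eq0.
have snorm_neq0 c : ev l (snorm c) != 0.
  by case: c => [|[|[|[|[|[|[|c]]]]]]]; rewrite /snorm ?(ev_mul, ev_opp) ?ev_const1
     ?el ?em ?en ?oppr_eq0 ?mulf_neq0 ?oner_neq0.
by rewrite /sweight; case: ifP => _; rewrite !ev_mul ?ev_const2 ?ev_const4 !mulf_neq0.
Qed.

End Transfer.

Section TraceForm.
Variables (F : fieldType) (lam mu nu : F).
Hypothesis two_neq0 : (2%:R : F) != 0.
Notation hermitian := (@Defs.hermitian F).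
Notation jmul := (jmul lam mu nu).
Notation jder := (jder lam mu nu).
Notation tform := (tform lam mu nu).

Lemma tform_jmulA u v w : hermitian u -> hermitian v -> hermitian w ->
  tform (jmul u v) w = tform u (jmul v w).
Proof.
move=> hu hv hw; have [l [hl <- <- <-]] := generic_point two_neq0 lam mu nu hu hv hw.
by rewrite !tformE -!(evm_sjmul hl); apply: ev_strace_eq tr_assoc_check_ok.
Qed.

Lemma jder_jmul_sq a b x : hermitian a -> hermitian b -> hermitian x ->
  jder a b (jmul x x) = mscale 2%:R (jmul (jder a b x) x).
Proof.
move=> ha hb hx; have [l [hl <- <- <-]] := generic_point two_neq0 lam mu nu hx ha hb.
rewrite -!(evm_sjmul hl) -!(evm_sjder hl) -(evm_sjmul hl) -(ev_const2 l) -evm_scale.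
exact: evm_eq jder_sq_check_ok.
Qed.

Lemma tform_nondegenerate m : lam != 0 -> mu != 0 -> nu != 0 -> hermitian m ->
  (forall z, hermitian z -> tform m z = 0) -> m = mzero F.
Proof.
move=> lam_neq0 mu_neq0 nu_neq0 hm m_perp.
have [l [hl em _ _]] := generic_point two_neq0 lam mu nu hm hm hm.
have coord0 n : (n < 27)%N -> ev l (svar (4 + n)) = 0.
  move=> n_lt; have /allP/(_ n) := trace_form_basis_check_ok.
  rewrite mem_iota add0n => /(_ n_lt)/(ev_eq l); rewrite ev_mul ev_strace (evm_sjmul hl) em.
  have -> : mtr (jmul m (evm l (sunit n))) = 0 := m_perp _ (hermitian_evm_sherm l _).
  move=> /esym/eqP.
  by rewrite mulf_eq0 (negbTE (ev_sweight_neq0 hl n two_neq0 lam_neq0 mu_neq0 nu_neq0)) => /eqP.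
rewrite -em; apply: evm_sherm (hermitian0 _) _ => // n n_lt.
by rewrite coord0 // /hcoord /mzero /= !octc_zero !if_same.
Qed.

End TraceForm.

Section InnerDerivations.
Variables (F : fieldType) (lam mu nu : F).
Hypothesis two_neq0 : (2%:R : F) != 0.
Notation hermitian := (@Defs.hermitian F).
Notation jmul := (jmul lam mu nu).
Notation jder := (jder lam mu nu).
Notation tform := (tform lam mu nu).
Notation inner_der := (inner_der lam mu nu).

Lemma hermitian_jder a b x : hermitian a -> hermitian b -> hermitian x ->
  hermitian (jder a b x).
Proof. by move=> ha hb hx; apply: hermitianB; do !apply: hermitian_jmul. Qed.

Lemma tform_jmul_adj a u w : hermitian a -> hermitian u -> hermitian w ->
  tform (jmul a u) w = tform u (jmul a w).
Proof. by move=> ha hu hw; rewrite jmulC tform_jmulA. Qed.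

Lemma tform_jder a b x y : hermitian a -> hermitian b -> hermitian x -> hermitian y ->
  tform (jder a b x) y = - tform x (jder a b y).
Proof.
move=> ha hb hx hy.
rewrite !jderE /msub tformDl tformZl tformDr tformZr.
rewrite !tform_jmul_adj //; try by apply: hermitian_jmul.
ring.
Qed.

Lemma inner_der_cons a b s x :
  inner_der ((a, b) :: s) x = madd (jder a b x) (inner_der s x).
Proof. by []. Qed.

Lemma hermitian_inner_der s x : herm_pairs s -> hermitian x -> hermitian (inner_der s x).
Proof.
elim: s => [|[a b] s IH]; first by move=> _ _; apply: hermitian0.
case=> ha hb hs hx; rewrite inner_der_cons.
by apply: hermitianD; [apply: hermitian_jder | apply: IH].
Qed.

Lemma tform_inner_der s x y : herm_pairs s -> hermitian x -> hermitian y ->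
  tform (inner_der s x) y = - tform x (inner_der s y).
Proof.
elim: s => [|[a b] s IH]; first by move=> _ _ _; rewrite tform0l tformC tform0l oppr0.
case=> ha hb hs hx hy; rewrite !inner_der_cons tformDl tformDr tform_jder // IH //.
by rewrite opprD.
Qed.

Lemma inner_der_jmul_sq s x : herm_pairs s -> hermitian x ->
  inner_der s (jmul x x) = mscale 2%:R (jmul (inner_der s x) x).
Proof.
elim: s => [|[a b] s IH]; first by move=> _ _; rewrite jmul0l; mx_ring.
case=> ha hb hs hx; rewrite !inner_der_cons jder_jmul_sq // IH // jmulDl; mx_ring.
Qed.

End InnerDerivations.

Section TwoLocal.
Variables (F : fieldType) (lam mu nu : F).
Hypotheses (two_neq0 : (2%:R : F) != 0) (lam_neq0 : lam != 0) (mu_neq0 : mu != 0)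
  (nu_neq0 : nu != 0).
Notation hermitian := (@Defs.hermitian F).
Notation jmul := (jmul lam mu nu).
Notation tform := (tform lam mu nu).
Variable Delta : mat3 F -> mat3 F.
Hypothesis Delta_2local : two_local_inner lam mu nu Delta.

Lemma hermitian_two_local x : hermitian x -> hermitian (Delta x).
Proof.
by move=> hx; have [s [hs [-> _]]] := Delta_2local hx hx; apply: hermitian_inner_der.
Qed.

Lemma tform_two_local x y : hermitian x -> hermitian y ->
  tform (Delta x) y = - tform x (Delta y).
Proof.
by move=> hx hy; have [s [hs [-> ->]]] := Delta_2local hx hy; apply: tform_inner_der.
Qed.

Lemma two_local_jmul_sq x : hermitian x -> Delta (jmul x x) = mscale 2%:R (jmul (Delta x) x).
Proof.
move=> hx; have [s [hs [ex exx]]] := Delta_2local hx (hermitian_jmul lam mu nu hx hx).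
by rewrite exx ex; apply: inner_der_jmul_sq.
Qed.

Lemma two_local_linear a b x y : hermitian x -> hermitian y ->
  Delta (madd (mscale a x) (mscale b y)) = madd (mscale a (Delta x)) (mscale b (Delta y)).
Proof.
move=> hx hy; have hw : hermitian (madd (mscale a x) (mscale b y)).
  by apply: hermitianD; apply: hermitianZ.
apply: msub_eq0; apply: (tform_nondegenerate two_neq0 lam_neq0 mu_neq0 nu_neq0).
  apply: hermitianB; first exact: hermitian_two_local.
  by apply: hermitianD; apply: hermitianZ; apply: hermitian_two_local.
move=> z hz; rewrite /msub tformDl tformZl tformDl !tformZl !tform_two_local //.
by rewrite tformDl !tformZl; ring.
Qed.

Lemma two_localD x y : hermitian x -> hermitian y -> Delta (madd x y) = madd (Delta x) (Delta y).
Proof.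
move=> hx hy; have -> : madd x y = madd (mscale 1 x) (mscale 1 y) by mx_ring.
by rewrite two_local_linear //; mx_ring.
Qed.

Lemma two_local_jmul x y : hermitian x -> hermitian y ->
  Delta (jmul x y) = madd (jmul (Delta x) y) (jmul x (Delta y)).
Proof.
move=> hx hy; have := two_local_jmul_sq (hermitianD hx hy).
rewrite !(jmulDl, jmulDr) [jmul y x]jmulC !two_localD;
  try by repeat (apply: hermitianD || apply: hermitian_jmul || apply: hermitian_two_local).
rewrite !(jmulDl, jmulDr) !two_local_jmul_sq // [jmul (Delta y) x]jmulC.
move: (Delta (jmul x y)) (jmul (Delta x) x) (jmul (Delta y) y) (jmul (Delta x) y)
  (jmul x (Delta y)) => D Xx Yy Xy xY e.
apply: mx_ext => i j k; move/(congr1 (fun m => mxc m i j k)): e.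
rewrite !(mxc_add, mxc_scale) => /eqP; rewrite -subr_eq0 => /eqP e.
apply/eqP; rewrite -subr_eq0 -(mulrI_eq0 _ (lregP two_neq0)) -e; apply/eqP; ring.
Qed.

End TwoLocal.

Theorem theorem3p5 (F : closedFieldType) (lam mu nu : F) :
  ~~ (2%N \in [pchar F]) ->
  lam != 0 -> mu != 0 -> nu != 0 ->
  forall Delta : mat3 F -> mat3 F,
    two_local_inner lam mu nu Delta -> is_derivation lam mu nu Delta.
Proof.
move=> char_neq2 lam_neq0 mu_neq0 nu_neq0 Delta Delta_2local.
have two_neq0 : (2%:R : F) != 0 by move: char_neq2; rewrite inE.
split=> [a b x y hx hy | x y hx hy].
- exact: (two_local_linear two_neq0 lam_neq0 mu_neq0 nu_neq0 Delta_2local).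
- exact: (two_local_jmul two_neq0 lam_neq0 mu_neq0 nu_neq0 Delta_2local).
Qed.
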